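(* Let $n\ge1$, equip $\{0,1\}^n$ with the uniform probability measure, and for $k=0,\dots,n$ let $\mathcal{F}^*_k$ be the product of the trivial $\sigma$-algebra on $\{0,1\}^k$ (first $k$ coordinates) and the full $\sigma$-algebra on $\{0,1\}^{n-k}$ (last $n-k$ coordinates); put $\mathcal{F}^*_{n+1}=\mathcal{F}^*_n$, and write $\mathbb{E}^*_k=\mathbb{E}(\cdot\mid\mathcal{F}^*_k)$. Then there is no constant $C$ (independent of $n$) such that for all $n$ and all $f_0,\dots,f_n\in L^1(\{0,1\}^n)$ satisfying $\mathbb{E}^*_{k+1}f_k=0$ for $k=0,\dots,n$, one has \[C\,\mathbb{E}\Big(\sum_{k=0}^n|f_k|^2\Big)^{1/2}\ge\mathbb{E}\Big(\sum_{k=0}^n|\mathbb{E}^*_kf_k|^2\Big)^{1/2}.\] *)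

From mathcomp Require Import all_boot all_order all_algebra.
From mathcomp Require Import reals.
Set Implicit Arguments. Unset Strict Implicit. Unset Printing Implicit Defensive.
Import Order.TTheory GRing.Theory Num.Theory.
Local Open Scope ring_scope.

Definition cube (n : nat) := {ffun 'I_n -> bool}.

(* y lies in the same atom of F*_k as x : y agrees with x on the last n-k
   coordinates (indices i >= k).  For k >= n every y agrees, so F*_k is
   trivial for k >= n; in particular F*_{n+1} = F*_n. *)
Definition agree (n k : nat) (x y : cube n) : bool :=
  [forall i : 'I_n, (k <= i)%N ==> (y i == x i)].

Definition condE (R : realType) (n k : nat) (f : cube n -> R) (x : cube n) : R :=
  (#|[pred y | agree k x y]|%:R)^-1 * \sum_(y : cube n | agree k x y) f y.

Definition expect (R : realType) (n : nat) (g : cube n -> R) : R :=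
  (#|{: cube n}|%:R)^-1 * \sum_(x : cube n) g x.

From mathcomp Require Import all_boot all_order all_algebra.
From mathcomp Require Import reals.
From mathcomp Require Import lra.
Set Implicit Arguments.
Unset Strict Implicit.
Unset Printing Implicit Defensive.

Import Order.TTheory GRing.Theory Num.Theory.
Local Open Scope ring_scope.

(* Take n = 2N, let A be the set of points vanishing on every even coordinate,
   and put f_k = 1_A r_k for odd k, where r_k is the Rademacher sign of
   coordinate k, and f_k = 0 otherwise.  Each f_k is odd in coordinate k, so
   E*_{k+1} f_k = 0, and the square function of (f_k) is at most
   sqrt(n+1) 1_A.  On the other hand |E*_k f_k| = E*_k 1_A; since E*_k is
   self-adjoint, its integral against the event "k-1 is the last even
   coordinate equal to 1" is P(A)/2.  These events are disjoint for the N odd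
   values of k, so the square function of (E*_k f_k) has expectation at least
   N P(A)/2, which beats C sqrt(2N+1) P(A) once N is large. *)

Section ConditionalExpectation.
Variables (R : realType) (n k : nat).
Implicit Types (x y z : cube n) (f g : cube n -> R).

Lemma agree_eq x y (i : 'I_n) : agree k x y -> (k <= i)%N -> y i = x i.
Proof. by move=> /forallP/(_ i)/implyP + ki => /(_ ki)/eqP. Qed.

Lemma agree_refl x : agree k x x.
Proof. by apply/forallP=> i; apply/implyP. Qed.

Lemma agree_sym x y : agree k x y = agree k y x.
Proof.
by apply/idP/idP=> a; apply/forallP=> i; apply/implyP=> ki; rewrite (agree_eq a ki).
Qed.

Lemma agree_trans x y z : agree k x y -> agree k y z -> agree k x z.
Proof.
move=> axy ayz; apply/forallP=> i; apply/implyP=> ki.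
by rewrite (agree_eq ayz ki) (agree_eq axy ki).
Qed.

Lemma card_atom_agree x y : agree k x y ->
  #|[pred z | agree k x z]| = #|[pred z | agree k y z]|.
Proof.
move=> axy; apply: eq_card=> z /=; apply/idP/idP; last exact: agree_trans.
by apply: agree_trans; rewrite agree_sym.
Qed.

Lemma condE_eq_on_atom f g x :
  (forall y, agree k x y -> f y = g y) -> condE k f x = condE k g x.
Proof. by move=> fg; rewrite /condE; congr (_ * _); apply: eq_bigr. Qed.

Lemma condE_eq0 f x : (forall y, f y = 0) -> condE k f x = 0.
Proof. by move=> f0; rewrite /condE big1 ?mulr0. Qed.

Lemma condEZ (c : R) f x : condE k (fun y => c * f y) x = c * condE k f x.
Proof. by rewrite /condE -mulr_sumr mulrCA. Qed.

Lemma condE_ge0 f x : (forall y, 0 <= f y) -> 0 <= condE k f x.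
Proof. by move=> f0; rewrite /condE mulr_ge0 ?invr_ge0 ?ler0n ?sumr_ge0. Qed.

(* The kernel of [condE k] is symmetric, since two points of one atom see
   atoms of the same size. *)
Lemma sum_condE_mul f g : \sum_x condE k f x * g x = \sum_x f x * condE k g x.
Proof.
pose w x y : R := (agree k x y)%:R / #|[pred z | agree k x z]|%:R.
have condE_w h x : condE k h x = \sum_y w x y * h y.
  rewrite /condE mulr_sumr big_mkcond; apply: eq_bigr => y _ /=.
  by rewrite /w; case: (agree k x y); rewrite ?mul1r ?mul0r // mulrC.
have w_sym x y : w x y = w y x.
  rewrite /w agree_sym; case: (boolP (agree k y x)) => [ayx | _]; last by rewrite !mul0r.
  by rewrite (card_atom_agree ayx).
under eq_bigr do rewrite condE_w mulr_suml.
under [RHS]eq_bigr do rewrite condE_w mulr_sumr.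
rewrite exchange_big; apply: eq_bigr => y _; apply: eq_bigr => x _.
by rewrite w_sym mulrCA mulrA.
Qed.

Section Flip.
Variable t : 'I_n.

Definition flip x : cube n := [ffun i => if i == t then ~~ x i else x i].

Lemma flipK : involutive flip.
Proof. by move=> x; apply/ffunP=> i; rewrite !ffunE; case: eqP => // _; rewrite negbK. Qed.

Hypothesis tk : (t < k)%N.

Lemma agree_flip x y : agree k x (flip y) = agree k x y.
Proof.
have flip_tail (i : 'I_n) : (k <= i)%N -> flip y i = y i.
  by rewrite ffunE; case: eqP => // -> ; rewrite leqNgt tk.
by apply: eq_forallb => i; case: (leqP k i) => // ki; rewrite flip_tail.
Qed.

Lemma condE_flip_odd f x : (forall y, f (flip y) = - f y) -> condE k f x = 0.
Proof.
move=> f_odd; rewrite /condE; set S := \sum_(y | agree k x y) f y.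
suff -> : S = 0 by rewrite mulr0.
have : S = - S.
  rewrite {1}/S (reindex_inj (inv_inj flipK)) /= -sumrN.
  by apply: eq_big => y; rewrite ?agree_flip ?f_odd.
lra.
Qed.

Lemma condE_coord x : condE k (fun y => (y t)%:R : R) x = 2^-1.
Proof.
have card_half : #|[pred y | agree k x y]| = (#|[pred y | agree k x y && y t]|).*2.
  rewrite -(cardID [pred y : cube n | y t] [pred y | agree k x y]) -addnn.
  congr (_ + _); rewrite -!sum1_card (reindex_inj (inv_inj flipK)) /=.
  by apply: eq_bigl => y; rewrite !inE agree_flip // ffunE eqxx negbK andbC.
have card_gt0 : (0 < #|[pred y | agree k x y && y t]|)%N.
  by rewrite -double_gt0 -card_half; apply/card_gt0P; exists x; exact: agree_refl.
rewrite /condE card_half -muln2 natrM invfM -mulrA mulrC.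
suff -> : \sum_(y | agree k x y) (y t)%:R = #|[pred y | agree k x y && y t]|%:R :> R.
  by rewrite mulfK // pnatr_eq0 -lt0n.
rewrite -sum1_card natr_sum big_mkcondr /=.
by apply: eq_bigr => y _; case: (y t).
Qed.

End Flip.
End ConditionalExpectation.

Lemma sum_sel_le_sqrt_sumsq (R : rcfType) (m : nat) (a : 'I_m -> R) (E : pred 'I_m) :
  (forall k k', E k -> E k' -> k = k') ->
  \sum_(k < m) `|a k| * (E k)%:R <= Num.sqrt (\sum_(k < m) `|a k| ^+ 2).
Proof.
move=> E_uniq; have [k0 Ek0 | noE] := pickP E; last first.
  by rewrite big1 ?sqrtr_ge0 // => k _; rewrite noE mulr0.
rewrite (bigD1 k0) //= big1 => [|k nk]; last first.
  have [Ek | _] := boolP (E k); last by rewrite mulr0.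
  by rewrite (E_uniq _ _ Ek Ek0) eqxx in nk.
rewrite Ek0 mulr1 addr0 -[leLHS]normr_id -sqrtr_sqr ler_sqrt; last first.
  by apply: sumr_ge0 => k _; rewrite sqr_ge0.
by rewrite (bigD1 k0) //= lerDl sumr_ge0 // => k _; rewrite sqr_ge0.
Qed.

Lemma sum_odd_ord (m : nat) : (\sum_(k < m) odd k)%N = m./2.
Proof.
elim: m => [|m IHm]; first by rewrite big_ord0.
by rewrite big_ord_recr /= IHm uphalf_half addnC.
Qed.

Lemma sum_odd_lt (n : nat) : (\sum_(k < n.+1) (odd k && (k < n)%N))%N = n./2.
Proof.
rewrite big_ord_recr /= ltnn andbF addn0 -sum_odd_ord.
by apply: eq_bigr => k _; rewrite ltn_ord andbT.
Qed.

(* [evens_off 0] is the set A, [cex k] is f_k and [marker k] is the event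
   that k-1 is the last even coordinate equal to 1. *)
Definition evens_off (n k : nat) (x : cube n) : bool :=
  [forall i : 'I_n, (k <= i)%N ==> odd i || ~~ x i].

Definition cex (R : realType) (n k : nat) (x : cube n) : R :=
  if odd k then oapp (fun i : 'I_n => (evens_off 0 x)%:R * (-1) ^+ x i) 0 (insub k)
  else 0.

Definition marker (n k : nat) (x : cube n) : bool :=
  [&& odd k, [exists t : 'I_n, (t.+1 == k) && x t] & evens_off k x].

Section Counterexample.
Variables (R : realType) (n : nat).
Implicit Types (x y : cube n).

Local Notation ind b := ((b : bool)%:R : R).

Lemma evens_offW k k' x : (k <= k')%N -> evens_off k x -> evens_off k' x.
Proof.
move=> kk' /forallP ev; apply/forallP=> i; apply/implyP=> ki.
by move/implyP: (ev i); apply; apply: leq_trans ki.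
Qed.

Lemma evens_off_agree k x y : agree k x y -> evens_off k x = evens_off k y.
Proof.
by move=> a; apply: eq_forallb => i; case: (leqP k i) => // ki; rewrite (agree_eq a ki).
Qed.

Lemma evens_off_flip k (t : 'I_n) x : odd t -> evens_off k (flip t x) = evens_off k x.
Proof. by move=> ot; apply: eq_forallb => i; rewrite ffunE; case: eqP => // ->; rewrite ot. Qed.

Lemma cexE (i : 'I_n) x : odd i -> cex R i x = ind (evens_off 0 x) * (-1) ^+ x i.
Proof. by move=> oi; rewrite /cex oi valK. Qed.

Lemma cex_eq0 k x : ~~ (odd k && (k < n)%N) -> cex R k x = 0.
Proof. by rewrite /cex; case: (odd k) => //= kn; rewrite insubF // (negbTE kn). Qed.

Lemma condE_cex_next k x : condE k.+1 (cex R k) x = 0.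
Proof.
have [/andP[ok kn] | out] := boolP (odd k && (k < n)%N); last first.
  by apply: condE_eq0 => y; exact: cex_eq0.
pose i : 'I_n := Ordinal kn.
apply: (condE_flip_odd (t := i)) => // y.
rewrite !(cexE (i := i)) // evens_off_flip // ffunE eqxx.
by rewrite (signrN _ (y i)) mulrN.
Qed.

Lemma cex_sqr_le k x : `|cex R k x| ^+ 2 <= ind (evens_off 0 x).
Proof.
have [/andP[ok kn] | out] := boolP (odd k && (k < n)%N); last first.
  by rewrite cex_eq0 // normr0 expr0n ler0n.
rewrite (cexE (i := Ordinal kn)) // normrM normr_sign mulr1.
by case: (evens_off 0 x); rewrite ?normr1 ?normr0 ?expr1n ?expr0n.
Qed.

Lemma sqrt_sum_cex_le x :
  Num.sqrt (\sum_(k < n.+1) `|cex R k x| ^+ 2) <= Num.sqrt n.+1%:R * ind (evens_off 0 x).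
Proof.
have sqrt_ind (b : bool) : Num.sqrt (ind b) = ind b by case: b; rewrite ?sqrtr0 ?sqrtr1.
rewrite -sqrt_ind -sqrtrM // ler_sqrt ?mulr_ge0 //.
rewrite mulr_natl -[X in _ *+ X]card_ord -sumr_const.
by apply: ler_sum => k _; exact: cex_sqr_le.
Qed.

Lemma condE_cex_abs (i : 'I_n) x : odd i ->
  `|condE i (cex R i) x| = condE i (fun y => ind (evens_off 0 y)) x.
Proof.
move=> oi; have -> : condE i (cex R i) x =
                    condE i (fun y => (-1) ^+ x i * ind (evens_off 0 y)) x.
  by apply: condE_eq_on_atom => y a; rewrite cexE // (agree_eq a (leqnn i)) mulrC.
by rewrite condEZ normrM normr_sign mul1r ger0_norm // condE_ge0.
Qed.

Lemma marker_uniq x k k' : marker k x -> marker k' x -> k = k'.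
Proof.
suff no_lt k1 k2 : (k1 < k2)%N -> marker k1 x -> marker k2 x -> False.
  move=> m m'; case: (ltngtP k k') => // lt; exfalso.
    exact: no_lt _ _ lt m m'.
  exact: no_lt _ _ lt m' m.
move=> lt /and3P[_ _ ev] /and3P[ok2 /existsP[t /andP[/eqP tk2 xt]] _].
have k1t : (k1 <= t)%N by rewrite -ltnS tk2.
move/forallP: ev => /(_ t) /implyP /(_ k1t).
by rewrite xt orbF; rewrite -tk2 /= in ok2; rewrite (negbTE ok2).
Qed.

Lemma condE_marker (t : 'I_n) x : odd t.+1 -> evens_off 0 x ->
  condE t.+1 (fun y => ind (marker t.+1 y)) x = 2^-1.
Proof.
move=> ot ev; rewrite -(condE_coord R (ltnSn t) x); apply: condE_eq_on_atom => y a.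
rewrite /marker ot -(evens_off_agree a) (evens_offW _ ev) // andbT /=.
suff -> : [exists s : 'I_n, (s.+1 == t.+1) && y s] = y t by [].
apply/existsP/idP => [[s /andP[/eqP [st] ys]] | yt]; last by exists t; rewrite eqxx.
by rewrite (_ : t = s) //; apply: val_inj.
Qed.

Lemma sum_condE_cex_marker (i : 'I_n) : odd i ->
  \sum_(x : cube n) `|condE i (cex R i) x| * ind (marker i x)
  = (\sum_(x : cube n) ind (evens_off 0 x)) / 2.
Proof.
move=> oi; have [t ti] : exists t : 'I_n, t.+1 = i.
  have i_gt0 : (0 < i)%N by case: (nat_of_ord i) oi.
  by exists (Ordinal (leq_ltn_trans (leq_pred i) (ltn_ord i))); rewrite /= prednK.
under eq_bigr do rewrite condE_cex_abs //.
rewrite sum_condE_mul mulr_suml; apply: eq_bigr => x _.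
case: (boolP (evens_off 0 x)) => ev; last by rewrite !mul0r.
by rewrite -ti condE_marker ?ti // mul1r div1r.
Qed.

Lemma sum_sqrt_condE_cex_ge :
  (n./2)%:R * ((\sum_(x : cube n) ind (evens_off 0 x)) / 2)
  <= \sum_(x : cube n) Num.sqrt (\sum_(k < n.+1) `|condE k (cex R k) x| ^+ 2).
Proof.
pose M := \sum_(x : cube n) \sum_(k < n.+1) `|condE k (cex R k) x| * ind (marker k x).
apply: le_trans (_ : _ <= M) _; rewrite /M.
  rewrite exchange_big /= -sum_odd_lt natr_sum mulr_suml; apply: ler_sum => k _.
  have [/andP[ok kn] | _] := boolP (odd k && (k < n)%N); last first.
    by rewrite mul0r sumr_ge0 // => x _; rewrite mulr_ge0.
  by rewrite mul1r (sum_condE_cex_marker (i := Ordinal kn)).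
apply: ler_sum => x _; apply: sum_sel_le_sqrt_sumsq => k k' mk mk'.
exact/val_inj/(marker_uniq mk mk').
Qed.

Lemma sum_evens_off_gt0 : 0 < \sum_(x : cube n) ind (evens_off 0 x).
Proof.
pose x0 : cube n := [ffun _ => false].
have ev0 : evens_off 0 x0 by apply/forallP => i; rewrite ffunE orbT.
by rewrite (bigD1 x0) //= ev0 ltr_pwDl // sumr_ge0.
Qed.

End Counterexample.

Lemma sqrt_double_lt_half (R : realType) (c : R) :
  exists N : nat, (0 < N)%N /\ c * Num.sqrt N.*2.+1%:R < N%:R / 2.
Proof.
pose N := (Num.truncn (12 * c ^+ 2)).+1.
exists N; split => //.
have N_big : 12 * c ^+ 2 < N%:R := truncnS_gt _.
have N_ge1 : 1 <= N%:R :> R by rewrite ler1n.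
set s := Num.sqrt _.
have s_ge0 : 0 <= s := sqrtr_ge0 _.
have s_sqr : s ^+ 2 = N%:R * 2 + 1 by rewrite sqr_sqrtr // -muln2 -addn1 natrD natrM.
have [cs_le0 | cs_gt0] := lerP (c * s) 0; first lra.
have : (c * s) ^+ 2 < (N%:R / 2) ^+ 2 by rewrite exprMn s_sqr; nra.
nra.
Qed.

Theorem theorem1p4 (R : realType) :
  ~ (exists C : R, forall (n : nat), (1 <= n)%N ->
      forall f : 'I_n.+1 -> cube n -> R,
        (forall (k : 'I_n.+1) (x : cube n), condE (k.+1) (f k) x = 0) ->
        expect (fun x => Num.sqrt (\sum_(k < n.+1) `|condE k (f k) x| ^+ 2))
        <= C * expect (fun x => Num.sqrt (\sum_(k < n.+1) `|f k x| ^+ 2))).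
Proof.
case=> C bound; have [N [N_gt0 small]] := sqrt_double_lt_half `|C|.
have N2_gt0 : (0 < N.*2)%N by rewrite double_gt0.
have := bound _ N2_gt0 (fun k => @cex R N.*2 k) (fun k x => condE_cex_next R k x).
rewrite /expect [leRHS]mulrCA ler_pM2l; last first.
  by rewrite invr_gt0 ltr0n; apply/card_gt0P; exists [ffun _ => false].
set T := \sum_x _; set S := \sum_x _ => T_le.
have := sum_sqrt_condE_cex_ge R N.*2; rewrite doubleK -/T => T_ge.
set A := \sum_(x : cube N.*2) _ in T_ge; set s := Num.sqrt _ in small.
have S_le : S <= s * A.
  by rewrite mulr_sumr; apply: ler_sum => x _; exact: sqrt_sum_cex_le.
have CS_le : C * S <= `|C| * s * A.
  have S_ge0 : 0 <= S by apply: sumr_ge0 => x _; exact: sqrtr_ge0.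
  by rewrite -mulrA; apply: le_trans (ler_wpM2r S_ge0 (ler_norm C)) (ler_wpM2l _ S_le).
have := sum_evens_off_gt0 R N.*2; rewrite -/A => A_gt0.
have : `|C| * s * A < N%:R / 2 * A by rewrite ltr_pM2r.
lra.
Qed.
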